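(* Let $d\ge 1$ be an integer, $\gamma^2>0$ and $\sigma^2\ge 0$. For a finite non-empty coalition $\mathcal{K}$ of participants, where participant $k$ has data size $D_k>0$, let $K=|\mathcal{K}|$ and define the generalization error of the model trained by $\mathcal{K}$ as $$\varepsilon_{\mathcal{K}}=\frac{d\gamma^2}{K^2}\sum_{k\in\mathcal{K}}\frac{1}{D_k}+\frac{K-1}{K}\sigma^2 .$$ Let $\mathcal{K}_a$ and $\mathcal{K}_b$ be two disjoint non-empty coalitions with $K_a=|\mathcal{K}_a|$, $K_b=|\mathcal{K}_b|$, and let $H_a=K_a\big/\sum_{k\in\mathcal{K}_a}D_k^{-1}$ and $H_b=K_b\big/\sum_{k\in\mathcal{K}_b}D_k^{-1}$ be the harmonic means of the data sizes in $\mathcal{K}_a$ and $\mathcal{K}_b$, and assume $H_a\le H_b$. Write $\varepsilon_a=\varepsilon_{\mathcal{K}_a}$, $\varepsilon_b=\varepsilon_{\mathcal{K}_b}$, $\varepsilon_{a+b}=\varepsilon_{\mathcal{K}_a\cup\mathcal{K}_b}$. Then $\varepsilon_{a+b}<\max\{\varepsilon_a,\varepsilon_b\}$ if and only if $$\frac{\sigma^2}{\gamma^2}<\frac{H_bK_b+K_a(2H_b-H_a)}{H_aH_b(K_a+K_b)/d}.$$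
   Context: This models federated learning with linear models: $d$ is the feature dimension, $\gamma^2$ the variance of Gaussian noise on training targets (data variance), and $\sigma^2$ the variance capturing divergence across clients' feature distributions (client variance). The displayed formula for $\varepsilon_{\mathcal{K}}$ is taken as the definition of the generalization error of the federated model trained by coalition $\mathcal{K}$. *)

From HB Require Import structures.
From mathcomp Require Import all_boot all_order all_algebra.
Set Implicit Arguments. Unset Strict Implicit. Unset Printing Implicit Defensive.
Import Order.TTheory GRing.Theory Num.Theory.
Local Open Scope ring_scope.

Definition gen_err {R : realFieldType} {T : finType} (d : nat) (gamma2 sigma2 : R)
  (D : T -> R) (K : {set T}) : R :=
  d%:R * gamma2 / (#|K|%:R ^+ 2) * (\sum_(k in K) (D k)^-1)
  + (#|K|%:R - 1) / #|K|%:R * sigma2.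

Definition harm_mean {R : realFieldType} {T : finType} (D : T -> R) (K : {set T}) : R :=
  #|K|%:R / (\sum_(k in K) (D k)^-1).

(* Write [S] for the sum of the reciprocal data sizes of a coalition of size
   [k], so that its error is [c g S / k^2 + (k - 1) s / k] (with [c, g, s] =
   [d, gamma2, sigma2]) and its harmonic mean is [k / S].  Merging a coalition
   (a, Sa) with a disjoint one (b, Sb) lowers the error of the first exactly
   when [s / g] is below an explicit threshold [Q(a, Ha; b, Hb)], because the
   error difference factors as a positive coefficient times [Q - s / g].  The
   difference of the two thresholds is [2 c (Hb - Ha) / (Ha Hb)], so the
   coalition with the smaller harmonic mean has the larger threshold, and the
   merged error is below the maximum exactly when [s / g] is below that larger
   threshold. *)

From HB Require Import structures.
From mathcomp Require Import all_boot all_order all_algebra.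
From mathcomp Require Import ring.
Import Order.TTheory GRing.Theory Num.Theory.
Local Open Scope ring_scope.

Section MergeError.
Variables (R : realFieldType) (c g s : R).
Hypotheses (c_gt0 : 0 < c) (g_gt0 : 0 < g).

Definition coalition_err (k S : R) : R :=
  c * g / k ^+ 2 * S + (k - 1) / k * s.

Definition merge_threshold (a Ha b Hb : R) : R :=
  (Hb * b + a * (2 * Hb - Ha)) / (Ha * Hb * (a + b) / c).

Section Sizes.
Variables (a b Sa Sb : R).
Hypotheses (a_gt0 : 0 < a) (b_gt0 : 0 < b) (Sa_gt0 : 0 < Sa) (Sb_gt0 : 0 < Sb).

Lemma coalition_err_sub_merge :
  coalition_err a Sa - coalition_err (a + b) (Sa + Sb)
  = b * g / (a * (a + b)) * (merge_threshold a (a / Sa) b (b / Sb) - s / g).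
Proof.
rewrite /coalition_err /merge_threshold; field.
by rewrite !gt_eqF ?addr_gt0.
Qed.

Lemma merge_lt_coalition_err :
  (coalition_err (a + b) (Sa + Sb) < coalition_err a Sa)
  = (s / g < merge_threshold a (a / Sa) b (b / Sb)).
Proof.
have coef_gt0 : 0 < b * g / (a * (a + b)) by rewrite divr_gt0 ?mulr_gt0 ?addr_gt0.
by rewrite -subr_gt0 coalition_err_sub_merge pmulr_rgt0 // subr_gt0.
Qed.

End Sizes.

Lemma merge_threshold_sub (a Ha b Hb : R) :
  0 < a -> 0 < b -> 0 < Ha -> 0 < Hb ->
  merge_threshold a Ha b Hb - merge_threshold b Hb a Ha = 2 * c * (Hb - Ha) / (Ha * Hb).
Proof.
move=> a_gt0 b_gt0 Ha_gt0 Hb_gt0; rewrite /merge_threshold; field.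
by rewrite !gt_eqF ?addr_gt0.
Qed.

Lemma merge_threshold_le (a Ha b Hb : R) :
  0 < a -> 0 < b -> 0 < Ha -> Ha <= Hb ->
  merge_threshold b Hb a Ha <= merge_threshold a Ha b Hb.
Proof.
move=> a_gt0 b_gt0 Ha_gt0 le_HaHb; have Hb_gt0 := lt_le_trans Ha_gt0 le_HaHb.
rewrite -subr_ge0 merge_threshold_sub //.
by rewrite divr_ge0 ?mulr_ge0 ?subr_ge0 // ltW.
Qed.

Lemma merge_lt_max_coalition_err (a b Sa Sb : R) :
  0 < a -> 0 < b -> 0 < Sa -> 0 < Sb -> a / Sa <= b / Sb ->
  (coalition_err (a + b) (Sa + Sb)
     < Num.max (coalition_err a Sa) (coalition_err b Sb))
  = (s / g < merge_threshold a (a / Sa) b (b / Sb)).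
Proof.
move=> a_gt0 b_gt0 Sa_gt0 Sb_gt0 le_HaHb.
rewrite lt_max merge_lt_coalition_err // (addrC a) (addrC Sa).
rewrite merge_lt_coalition_err // orb_idr // => /lt_le_trans; apply.
by apply: merge_threshold_le; rewrite ?divr_gt0.
Qed.

End MergeError.

Lemma sum_inv_gt0 (R : numFieldType) (T : finType) (D : T -> R) (K : {set T}) :
  (forall k, 0 < D k) -> K != set0 -> 0 < \sum_(k in K) (D k)^-1.
Proof.
move=> D_gt0 /set0Pn [x xK]; rewrite (bigD1 x) //= ltr_pwDl ?invr_gt0 //.
by apply: sumr_ge0 => k _; rewrite invr_ge0 ltW.
Qed.

Lemma cardsU_disjoint (T : finType) (A B : {set T}) :
  [disjoint A & B] -> #|A :|: B| = (#|A| + #|B|)%N.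
Proof. by move=> AB; rewrite cardsU disjoint_setI0 // cards0 subn0. Qed.

Lemma big_setU_disjoint (R : Type) (idx : R) (op : Monoid.com_law idx)
    (T : finType) (A B : {set T}) (F : T -> R) :
  [disjoint A & B] ->
  \big[op/idx]_(i in A :|: B) F i = op (\big[op/idx]_(i in A) F i) (\big[op/idx]_(i in B) F i).
Proof. by move=> AB; rewrite -bigU //; apply: eq_bigl => i; rewrite !inE. Qed.

Theorem corollary1 (R : realFieldType) (T : finType) (d : nat) (gamma2 sigma2 : R)
  (D : T -> R) (Ka Kb : {set T}) :
  (1 <= d)%N -> 0 < gamma2 -> 0 <= sigma2 ->
  (forall k, 0 < D k) ->
  Ka != set0 -> Kb != set0 -> [disjoint Ka & Kb] ->
  harm_mean D Ka <= harm_mean D Kb ->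
  (gen_err d gamma2 sigma2 D (Ka :|: Kb)
     < Num.max (gen_err d gamma2 sigma2 D Ka) (gen_err d gamma2 sigma2 D Kb)
   <->
   sigma2 / gamma2 <
     (harm_mean D Kb * #|Kb|%:R + #|Ka|%:R * (2 * harm_mean D Kb - harm_mean D Ka))
     / (harm_mean D Ka * harm_mean D Kb * (#|Ka|%:R + #|Kb|%:R) / d%:R)).
Proof.
move=> d_ge1 gamma2_gt0 _ D_gt0 Ka_neq0 Kb_neq0 disj le_harm.
rewrite /gen_err /harm_mean cardsU_disjoint // natrD big_setU_disjoint //.
by rewrite (@merge_lt_max_coalition_err R d%:R) ?ltr0n ?card_gt0 ?sum_inv_gt0.
Qed.
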